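(* Let $G=A\rtimes_\alpha H$ be a finite group, where $A\cong \mathbb{Z}_p^r$ for a prime $p$, $\alpha:H\to\mathrm{Aut}(A)$ is an action of $H$ on $A$, and $|H|$ is not divisible by $p$. Let $A'\le A$ be the subgroup of $H$-invariant elements. Then $A'$ has an $H$-invariant complement $A''\le A$ with the following property: whenever $G$ acts on a set $X$ such that the subgroup $H$ acts trivially on $X$, the subgroup $A''$ also acts trivially on $X$. *)

From mathcomp Require Import all_boot all_fingroup all_solvable.
Set Implicit Arguments. Unset Strict Implicit. Unset Printing Implicit Defensive.
Local Open Scope group_scope.

Definition is_gaction (gT : finGroupType) (G : {set gT}) (X : Type)
    (to : X -> gT -> X) : Prop :=
  (forall x : X, to x 1 = x) /\
  (forall x : X, {in G &, forall g h, to x (g * h) = to (to x g) h}).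

Definition acts_trivially (gT : finGroupType) (K : {set gT}) (X : Type)
    (to : X -> gT -> X) : Prop :=
  forall x : X, {in K, forall k, to x k = x}.

From mathcomp Require Import all_boot all_fingroup all_solvable.
Local Open Scope group_scope.

(* Take A'' = [~: A, H].  As A is abelian and of order coprime to |H|, it is
   the direct product of 'C_A(H) and [~: A, H] (Fitting's lemma).  If H acts
   trivially, the commutator a^-1 h^-1 a h of a in A and h in H acts as
   a^-1 a = 1, so the group [~: A, H] generated by these commutators acts
   trivially too. *)

Section TrivialAction.

Context {gT : finGroupType} {G : {group gT}} {X : Type} {to : X -> gT -> X}.
Hypothesis actG : is_gaction G to.

Lemma gaction_fixV {g} :
  g \in G -> (forall x, to x g = x) -> forall x, to x g^-1 = x.
Proof.
case: actG => to1 toM Gg fixg x.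
by rewrite -{1}[to x g^-1]fixg -toM ?groupV // mulVg to1.
Qed.

Lemma gaction_fix_commg {a h} : a \in G -> h \in G ->
  (forall x, to x h = x) -> forall x, to x [~ a, h] = x.
Proof.
case: actG => to1 toM Ga Gh fixh x.
have fixhV := gaction_fixV Gh fixh.
rewrite /commg /conjg !mulgA !toM ?groupM ?groupV // fixh fixhV.
by rewrite -toM ?groupV // mulVg to1.
Qed.

Lemma gaction_trivial_gen {S : {set gT}} :
  S \subset G -> acts_trivially S to -> acts_trivially <<S>> to.
Proof.
case: actG => to1 toM sSG fixS x g /gen_prodgP[n [c Sc ->]].
suff [] : \prod_(i < n) c i \in G /\ forall y, to y (\prod_(i < n) c i) = y.
  by [].
apply: (big_ind (fun g => g \in G /\ forall y, to y g = y)) => [|g1 g2|i _].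
- by rewrite group1.
- move=> [G1 fix1] [G2 fix2]; rewrite groupM //.
  by split=> // y; rewrite toM // fix1.
- by split=> [|y]; [apply: subsetP sSG _ (Sc i) | apply: fixS].
Qed.

Lemma gaction_trivial_commg {K H : {set gT}} :
    K \subset G -> H \subset G -> acts_trivially H to ->
  acts_trivially [~: K, H] to.
Proof.
move=> /subsetP sKG /subsetP sHG fixH.
apply: gaction_trivial_gen => [|x _ /imset2P[a h Ka Hh ->]].
  apply/subsetP=> _ /imset2P[a h Ka Hh ->]; exact: groupR (sKG a Ka) (sHG h Hh).
exact: gaction_fix_commg (sKG a Ka) (sHG h Hh) (fun y => fixH y h Hh) x.
Qed.

End TrivialAction.

Lemma coprime_abelian_cent_dprod {gT : finGroupType} {K H : {group gT}} :
  H \subset 'N(K) -> coprime #|K| #|H| -> abelian K -> 'C_K(H) \x [~: K, H] = K.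
Proof.
move=> nKH coKH abK.
have sRK : [~: K, H] \subset K by rewrite commg_subl.
have nRC : 'C_K(H) \subset 'N([~: K, H]).
  exact: subset_trans (subsetIl _ _) (sub_abelian_norm abK sRK).
have tiCR : 'C_K(H) :&: [~: K, H] = 1.
  by rewrite setIC setIA (setIidPl sRK) coprime_abel_cent_TI.
rewrite dprodE ?(sub_abelian_cent2 abK sRK) ?subsetIl //.
apply/eqP; rewrite eqEsubset mul_subG ?subsetIl //= (normC nRC).
have quoC : 'C_K(H) / [~: K, H] = 'C_(K / [~: K, H])(H / [~: K, H]).
  apply: coprime_norm_quotient_cent; rewrite ?commg_normr ?(coprimeSg sRK) //.
  exact: abelian_sol (abelianS sRK abK).
rewrite -quotientSK ?sub_abelian_norm // quoC.
by rewrite subsetI subxx quotient_cents2r.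
Qed.

Theorem lemma5p1 (gT : finGroupType) (G A H : {group gT}) (p r : nat) :
  prime p ->
  A ><| H = G ->
  p.-abelem A -> #|A| = (p ^ r)%N ->
  ~~ (p %| #|H|)%N ->
  exists2 A'' : {group gT},
    [/\ A'' \subset A, H \subset 'N(A''),
        'C_A(H) :&: A'' = 1 & 'C_A(H) * A'' = A]
    & forall (X : Type) (to : X -> gT -> X),
        is_gaction G to -> acts_trivially H to -> acts_trivially A'' to.
Proof.
move=> pr_p defG abelA _ p'H.
have [_ defAH nAH _] := sdprodP defG.
have coAH : coprime #|A| #|H|.
  by rewrite (pnat_coprime (abelem_pgroup abelA)) ?p'natE.
have abA := abelem_abelian abelA.
have [_ defA _ tiCR] := dprodP (coprime_abelian_cent_dprod nAH coAH abA).
exists [~: A, H]%G; first split=> //.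
- by rewrite commg_subl.
- exact: commg_normr.
move=> X to actG; apply: (gaction_trivial_commg actG).
  by rewrite -defAH mulG_subl.
by rewrite -defAH mulG_subr.
Qed.
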